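(* Let $k\geq 3$ and $n\geq 2k+1$, and write $A=A_n$. The complex $\partial B_A$ contains, as facets, all of the following sets: 1. $[i,i+1]\cup H\cup\{n-i+1\}$, where $1\leq i\leq \lfloor n/2\rfloor-k+1$ and $H\in\mathcal F_{2k-4}^{[i+2,n-i]}$; 2. $[i,i+1]\cup H\cup\{n-i-1\}$, where $1\leq i\leq \lfloor n/2\rfloor-k+1$ and $H\in\mathcal F_{2k-4}^{[i+2,n-i-2]}$; 3. $\{i+1\}\cup H\cup[n-i,n-i+1]$, where $1\leq i\leq \lfloor n/2\rfloor-k+1$ and $H\in\mathcal F_{2k-4}^{[i+2,n-i-1]}$; 4. $\{i\}\cup H\cup[n-i-1,n-i]$, where $1\leq i\leq \lfloor n/2\rfloor-k+1$ and $H\in\mathcal F_{2k-4}^{[i+2,n-i-2]}$; 5. $\{1\}\cup H\cup[n-1,n]$, where $H\in\mathcal F_{2k-4}^{[2,n-2]}$; 6. $\{\lfloor n/2\rfloor-k+2\}\cup H$, where $H\in\mathcal F_{2k-2}^{[\lfloor n/2\rfloor-k+3,\ \lceil n/2\rceil+k]}$.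
   Context: For integers $m\leq n$, $[m,n]=\{m,m+1,\dots,n\}$. For $j\geq 1$, $\mathcal F_{2j}^{[m,n]}$ is the set of all $2j$-sets of the form $\{i_1,i_1+1,i_2,i_2+1,\dots,i_j,i_j+1\}$ with $m\leq i_1$, $i_j+1\leq n$, and $i_t\leq i_{t+1}-2$ for $1\leq t\leq j-1$. It is partially ordered by $\leq_p$: for $2j$-sets $X=\{x_1<\dots<x_{2j}\}$, $Y=\{y_1<\dots<y_{2j}\}$, $X\leq_p Y$ iff $x_t\leq y_t$ for all $t$. For an antichain $S$ of $\mathcal F_{2k}^{[1,n]}$, $B(S)$ is the pure simplicial complex whose facets are the elements of the order ideal of $(\mathcal F_{2k}^{[1,n]},\leq_p)$ generated by $S$. Let $S-\mathbf 1_{2k}=\{\{x_1-1,x_1,\dots,x_k-1,x_k\}:\{x_1,x_1+1,\dots,x_k,x_k+1\}\in S,\ x_1>1\}$, and let $B_S$ be the pure complex whose facets are the facets of $B(S)$ that are not facets of $B(S-\mathbf 1_{2k})$; $B_S$ is a PL $(2k-1)$-ball and $\partial B_S$ (the complex generated by the $(2k-2)$-faces of $B_S$ lying in exactly one facet of $B_S$) is a PL $(2k-2)$-sphere. Fix $k\geq3$ and define the antichain $A_n=\{F_1,\dots,F_{\lfloor n/2\rfloor-k+1}\}$ with $F_i=[i,i+1]\cup[n-2k+4-i,\,n-i+1]$. *)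

(* Finite sets of naturals are represented canonically by
   strictly increasing lists (seq nat sorted by ltn). *)
From mathcomp Require Import all_boot.
Set Implicit Arguments. Unset Strict Implicit. Unset Printing Implicit Defensive.

Definition itv (a b : nat) : seq nat := iota a (b.+1 - a).

Definition is_set (X : seq nat) : Prop := sorted ltn X.

Definition sunion (X Y : seq nat) : seq nat := sort leq (undup (X ++ Y)).

Definition pairs_of (s : seq nat) : seq nat := flatten [seq [:: i; i.+1] | i <- s].

(* inF j m n X  <->  X \in F_{2j}^{[m,n]}:
   X = {i_1,i_1+1,...,i_j,i_j+1}, m <= i_1, i_j + 1 <= n, i_t <= i_{t+1} - 2 *)
Definition inF (j m n : nat) (X : seq nat) : Prop :=
  exists s : seq nat,
    [/\ size s = j, sorted (fun a b => a.+2 <= b) s,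
        all (fun i => (m <= i) && (i.+1 <= n)) s & X = pairs_of s].

(* X <=_p Y for sets of equal size (compared via sorted enumerations) *)
Definition le_p (X Y : seq nat) : bool := all2 leq X Y.

(* facets of B(S): the order ideal of (F_{2k}^{[1,n]}, <=_p) generated by S *)
Definition B_facet (k n : nat) (S : seq (seq nat)) (X : seq nat) : Prop :=
  inF k 1 n X /\ exists2 Y, Y \in S & le_p X Y.

Definition shift1 (S : seq (seq nat)) : seq (seq nat) :=
  [seq map predn Y | Y <- S & 1 < head 0 Y].

Definition BS_facet (k n : nat) (S : seq (seq nat)) (X : seq nat) : Prop :=
  B_facet k n S X /\ ~ B_facet k n (shift1 S) X.

Definition BS_bridge (k n : nat) (S : seq (seq nat)) (R : seq nat) : Prop :=
  [/\ is_set R, size R = (2 * k).-1,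
      exists2 F, BS_facet k n S F & {subset R <= F}
    & forall F1 F2, BS_facet k n S F1 -> BS_facet k n S F2 ->
        {subset R <= F1} -> {subset R <= F2} -> F1 = F2].

Definition bdry_face (k n : nat) (S : seq (seq nat)) (X : seq nat) : Prop :=
  is_set X /\ exists2 R, BS_bridge k n S R & {subset X <= R}.

Definition is_facet (C : seq nat -> Prop) (X : seq nat) : Prop :=
  C X /\ forall Y, C Y -> {subset X <= Y} -> {subset Y <= X}.

Definition A_n (k n : nat) : seq (seq nat) :=
  [seq sunion (itv i i.+1) (itv (n - 2 * k + 4 - i) (n - i + 1))
  | i <- itv 1 (n./2 - k + 1)].

(* A ridge of the ball B_S is a face of the boundary sphere exactly when it lies in a
   single facet of B_S, so each listed set X (of size 2k-1) is a facet of the boundary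
   as soon as X ∪ {x} is a facet of B_S for exactly one x.  Membership in
   F_{2k}^{[1,n]} is a parity condition: every point outside the set has an even
   number of its elements below it.  Comparing with the generators F_j, the facets of
   B_S are the members of F_{2k}^{[1,n]} whose least element a and greatest element b
   satisfy a <= m, a + b <= n + 1 and not (a < m and a + b < n), where
   m = floor(n/2) - k + 1.  In each of the six families the parity condition at one
   missing point (i, i+1, n-i, m, or the last resp. first gap of H) pins x down, and
   the conditions on a and b rule out every other candidate. *)

From mathcomp Require Import all_boot zify.
Set Implicit Arguments. Unset Strict Implicit. Unset Printing Implicit Defensive.

Definition even_below (X : seq nat) : Prop :=
  forall y, y \notin X -> ~~ odd (count (fun t => t < y) X).

Definition even_above (X : seq nat) : Prop :=
  forall y, y \notin X -> ~~ odd (count (fun t => y < t) X).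

Lemma size_pairs_of s : size (pairs_of s) = 2 * size s.
Proof. by elim: s => //= i s ->; rewrite mulnS. Qed.

Lemma mem_pairs_of t s : (t \in pairs_of s) = has (fun i => (t == i) || (t == i.+1)) s.
Proof. by elim: s => //= i s IH; rewrite !inE IH orbA. Qed.

Lemma even_count_pairs_of (p : pred nat) s :
  {in s, forall i, p i = p i.+1} -> ~~ odd (count p (pairs_of s)).
Proof.
elim: s => //= i s IH eq_p; rewrite eq_p ?mem_head // addnA addnn oddD odd_double /=.
by apply: IH => j js; apply: eq_p; rewrite inE js orbT.
Qed.

Lemma sorted_pairs_of s : sorted (fun a b => a.+2 <= b) s -> sorted ltn (pairs_of s).
Proof.
case: s => // i s /=; elim: s i => [|j s IH] i /=; first by rewrite andbT.
case/andP=> lt_ij /IH /= ->; rewrite ltnSn andbT; lia.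
Qed.

Lemma even_below_pairs_of s : even_below (pairs_of s).
Proof.
move=> y; rewrite mem_pairs_of => /hasPn y_out; apply: even_count_pairs_of => i /y_out.
by rewrite negb_or => /andP[/eqP ? /eqP ?]; apply/idP/idP; lia.
Qed.

Lemma count_below0 y X : all (fun t => y <= t) X -> count (fun t => t < y) X = 0.
Proof. by elim: X => //= t X IH /andP[le_yt /IH ->]; rewrite ltnNge le_yt. Qed.

Lemma pairs_of_even_below X : sorted ltn X -> even_below X ->
  exists2 s, sorted (fun a b => a.+2 <= b) s & X = pairs_of s.
Proof.
have [N] := ubnP (size X); elim: N X => // N IH [|x1 [|x2 r]] /= szX; first by exists [::].
- by move=> _ /(_ x1.+1); rewrite inE /=; lia.
move=> /andP[lt12 path_r] even_X.
have r_gt2 : all (ltn x2) r by apply: order_path_min path_r; apply: ltn_trans.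
have x2E : x2 = x1.+1.
  (* Otherwise exactly one element of X lies below the gap [x1.+1]. *)
  apply/eqP; rewrite eqn_leq lt12 andbT leqNgt; apply/negP => lt_x2.
  have x1r : x1.+1 \notin r by apply/negP => /(allP r_gt2) /=; lia.
  have := even_X x1.+1; rewrite /= !inE (negbTE x1r) count_below0; first by lia.
  by apply/allP => t /(allP r_gt2) /=; lia.
have even_r : even_below r.
  move=> y yr; have [y_x|y_x] := boolP ((y == x1) || (y == x1.+1)).
    by rewrite count_below0 //; apply/allP => t /(allP r_gt2) /=; move: y_x; lia.
  have : y \notin [:: x1, x2 & r] by rewrite !inE x2E (negbTE yr) orbF.
  by move/even_X => /=; lia.
have [s gap_s rE] := IH r (ltac:(lia)) (path_sorted path_r) even_r.
exists (x1 :: s); last by rewrite x2E rE.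
case: s gap_s rE => //= i s -> rE; rewrite andbT.
have : i \in r by rewrite rE inE eqxx.
by move/(allP r_gt2) => /=; lia.
Qed.

Lemma inFP j lo hi X : inF j lo hi X <->
  [/\ sorted ltn X, size X = 2 * j, {in X, forall t, lo <= t <= hi} & even_below X].
Proof.
split.
- case=> s [sz_s gap_s rng_s ->]; split.
  + exact: sorted_pairs_of.
  + by rewrite size_pairs_of sz_s.
  + move=> t; rewrite mem_pairs_of => /hasP[i /(allP rng_s)]; lia.
  + exact: even_below_pairs_of.
- case=> sorted_X sz_X rng_X /(pairs_of_even_below sorted_X)[s gap_s XE].
  exists s; split => //; first by move: sz_X; rewrite XE size_pairs_of; lia.
  apply/allP => i i_s; have pair_X : (i \in X) && (i.+1 \in X).
    by rewrite XE !mem_pairs_of; apply/andP; split; apply/hasP; exists i; rewrite ?eqxx ?orbT.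
  by case/andP: pair_X => /rng_X ? /rng_X ?; lia.
Qed.

Lemma even_above_of_below X : ~~ odd (size X) -> even_below X -> even_above X.
Proof.
move=> even_X below_X y yX; have := below_X y yX.
have -> : count (fun t => y < t) X = count (predC (fun t => t < y)) X.
  apply: eq_in_count => t tX /=; have : t != y by apply: contraNneq yX => <-.
  by lia.
by have := count_predC (fun t => t < y) X; move: even_X; lia.
Qed.

Lemma mem_sunion X Y t : (t \in sunion X Y) = (t \in X) || (t \in Y).
Proof. by rewrite /sunion mem_sort mem_undup mem_cat. Qed.

Lemma sorted_sunion X Y : sorted ltn (sunion X Y).
Proof.
by rewrite ltn_sorted_uniq_leq sort_uniq undup_uniq sort_sorted //; apply: leq_total.
Qed.

Lemma sunion_sorted_cat X Y : sorted ltn (X ++ Y) -> sunion X Y = X ++ Y.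
Proof.
rewrite ltn_sorted_uniq_leq => /andP[uXY sXY].
by rewrite /sunion undup_id // sorted_sort //; apply: leq_trans.
Qed.

Lemma sorted_ltn_cat X Y : sorted ltn X -> sorted ltn Y -> allrel ltn X Y ->
  sorted ltn (X ++ Y).
Proof. by rewrite !(sorted_pairwise ltn_trans) pairwise_cat => -> -> ->. Qed.

Lemma sunion_sandwich P H Q lo hi : lo <= hi -> sorted ltn P -> sorted ltn H -> sorted ltn Q ->
  all (fun t => t < lo) P -> {in H, forall t, lo <= t <= hi} -> all (fun t => hi < t) Q ->
  sunion P (sunion H Q) = P ++ H ++ Q.
Proof.
move=> lo_hi sP sH sQ P_lt rngH Q_gt.
have sHQ : sorted ltn (H ++ Q).
  by apply: sorted_ltn_cat => //; apply/allrelP => s t /rngH ? /(allP Q_gt) /=; lia.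
rewrite (sunion_sorted_cat sHQ) sunion_sorted_cat //; apply: sorted_ltn_cat => //.
apply/allrelP => s t /(allP P_lt) /= ?; rewrite mem_cat => /orP[/rngH|/(allP Q_gt) /=]; lia.
Qed.

Lemma itv_pair a b : b = a.+1 -> itv a b = [:: a; b].
Proof. by move=> ->; rewrite /itv subSn // subSnn. Qed.

Lemma perm_sunion1 X x : uniq X -> x \notin X -> perm_eq (sunion X [:: x]) (x :: X).
Proof.
move=> uX xX; apply: (@perm_trans _ (X ++ [:: x])); last by rewrite cats1 perm_rcons.
by rewrite /sunion perm_sort undup_id // cats1 rcons_uniq xX.
Qed.

Lemma sorted_eq_sunion1 F X x : sorted ltn F -> F =i x :: X -> F = sunion X [:: x].
Proof.
move=> sF FE; apply: (irr_sorted_eq ltn_trans ltnn sF (sorted_sunion _ _)) => t.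
by rewrite FE mem_sunion !inE orbC.
Qed.

Definition extremes (F : seq nat) (a b : nat) : Prop :=
  [/\ a \in F, b \in F & forall t, t \in F -> a <= t <= b].

Lemma extremes_exist F : F != [::] -> exists a b, extremes F a b.
Proof.
elim: F => // x [|y F] IH _.
  by exists x, x; split; rewrite ?mem_head // => t; rewrite inE => /eqP->; lia.
have [a [b [aF bF ab]]] := IH isT.
exists (minn x a), (maxn x b); split.
- by rewrite /minn; case: ifP; rewrite inE ?eqxx // aF orbT.
- by rewrite /maxn; case: ifP; rewrite inE ?eqxx // bF orbT.
- by move=> t; rewrite inE => /orP[/eqP->|/ab]; lia.
Qed.

Lemma eq_extremes F G a b : F =i G -> extremes F a b -> extremes G a b.
Proof. by move=> FG [aF bF ab]; split; rewrite -?FG // => t; rewrite -FG; apply: ab. Qed.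

Lemma exists_gap (H : seq nat) lo hi : size H < hi.+1 - lo ->
  exists y, (lo <= y <= hi) && (y \notin H).
Proof.
move=> szH; have [/hasP[y yI yH]|/hasPn full] :=
  boolP (has (fun y => y \notin H) (iota lo (hi.+1 - lo))).
  by exists y; rewrite yH andbT; move: yI; rewrite mem_iota; lia.
have := uniq_leq_size (iota_uniq lo (hi.+1 - lo)) (fun t tI => negbNE (full t tI)).
by rewrite size_iota leqNgt szH.
Qed.

Lemma size_lt_of_gap (H : seq nat) lo hi y : uniq H -> {in H, forall t, lo <= t <= hi} ->
  lo <= y <= hi -> y \notin H -> size H < hi.+1 - lo.
Proof.
move=> uH rngH y_in yH; have sub : {subset y :: H <= iota lo (hi.+1 - lo)}.
  by move=> t; rewrite inE mem_iota => /orP[/eqP->|/rngH]; lia.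
have uyH : uniq (y :: H) by rewrite /= yH.
by have := uniq_leq_size uyH sub; rewrite size_iota.
Qed.

Lemma last_gap (H : seq nat) lo hi : size H < hi.+1 - lo ->
  exists2 x, (lo <= x <= hi) && (x \notin H) & forall y, x < y <= hi -> y \in H.
Proof.
move/exists_gap => gap; have bounded y : (lo <= y <= hi) && (y \notin H) -> y <= hi.
  by case/andP=> /andP[].
case: (ex_maxnP gap bounded) => x x_gap x_max; exists x => // y xy.
apply/negPn/negP => yH; suff : y <= x by lia.
by apply: x_max; rewrite yH andbT; case/andP: x_gap; lia.
Qed.

Lemma first_gap (H : seq nat) lo hi : size H < hi.+1 - lo ->
  exists2 x, (lo <= x <= hi) && (x \notin H) & forall y, lo <= y < x -> y \in H.
Proof.
move/exists_gap => gap; case: (ex_minnP gap) => x x_gap x_min; exists x => // y xy.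
apply/negPn/negP => yH; suff : x <= y by lia.
by apply: x_min; rewrite yH andbT; case/andP: x_gap; lia.
Qed.

Lemma one_point_extension F X : sorted ltn F -> uniq X -> size F = (size X).+1 ->
  {subset X <= F} -> exists2 x, x \notin X & F = sunion X [:: x].
Proof.
move=> sF uX szF XF; have uF := sorted_uniq ltn_trans ltnn sF.
have [/hasP[x xF xX]|/hasPn FX] := boolP (has (fun t => t \notin X) F); last first.
  by have := uniq_leq_size uF (fun t tF => negbNE (FX t tF)); rewrite szF ltnn.
exists x => //; apply: sorted_eq_sunion1 => //.
have sub : {subset x :: X <= F} by move=> t; rewrite inE => /orP[/eqP->|/XF].
have uxX : uniq (x :: X) by rewrite /= xX.
have [_ FE] := uniq_min_size uxX sub (eq_leq szF).
by move=> t; rewrite FE.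
Qed.

Lemma path_ltn_last x s : path ltn x s -> x + size s <= last x s.
Proof. by elim: s x => //= [x|y s IH x /andP[xy /IH]]; lia. Qed.

Lemma all2_leq_iota s c : sorted ltn s ->
  all2 leq s (iota c (size s)) = all (fun t => t < c + size s) s.
Proof.
elim: s c => //= x s IH c path_xs; rewrite IH ?(path_sorted path_xs) // addSnnS.
have [s_lt|] := boolP (all _ s); rewrite ?andbF ?andbT //.
have := path_ltn_last path_xs; have := mem_last x s; rewrite inE.
case/orP=> [/eqP ->|/(allP s_lt) /= last_lt] size_le; apply/idP/idP; lia.
Qed.

Definition BS_ends (k n a b : nat) : Prop :=
  [/\ a <= n./2 - k + 1, a + b <= n.+1 & ~ (a < n./2 - k + 1 /\ a + b < n)].

Section BoundaryOfBA.

Variables k n : nat.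
Hypotheses (k_ge3 : 3 <= k) (n_ge : 2 * k + 1 <= n).

Local Notation m := (n./2 - k + 1).
Local Notation A := (A_n k n).

Definition window j := j :: j.+1 :: iota (n - 2 * k + 4 - j) (2 * k - 2).

Lemma A_nE : A = map window (itv 1 m).
Proof.
apply/eq_in_map => j; rewrite mem_iota => j_rng.
rewrite (@itv_pair j j.+1) //.
have -> : itv (n - 2 * k + 4 - j) (n - j + 1) = iota (n - 2 * k + 4 - j) (2 * k - 2).
  by rewrite /itv; congr iota; lia.
rewrite sunion_sorted_cat //; apply: sorted_ltn_cat; rewrite ?iota_ltn_sorted /= ?ltnSn //.
by apply/allrelP => x y; rewrite !inE mem_iota; lia.
Qed.

Lemma map_predn_window j : 0 < j <= m ->
  map predn (window j) = j.-1 :: j.-1.+1 :: iota (n - 2 * k + 3 - j) (2 * k - 2).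
Proof.
case/andP=> j_gt0 j_le; rewrite /window /= prednK //.
have -> : n - 2 * k + 4 - j = (n - 2 * k + 3 - j).+1 by lia.
by congr [:: _, _ & _]; elim: (2 * k - 2) (n - 2 * k + 3 - j) => //= L IH c; rewrite IH.
Qed.

Lemma le_p_window F a b j c : inF k 1 n F -> extremes F a b ->
  le_p F (j :: j.+1 :: iota c (2 * k - 2)) = (a <= j) && (b < c + (2 * k - 2)).
Proof.
case=> -[|i s] [sz_s gap_s _ FE] [aF bF ab]; first by move: k_ge3; rewrite -sz_s.
have {}FE : F = i :: i.+1 :: pairs_of s by rewrite FE.
have path_P : path ltn i.+1 (pairs_of s) by case/andP: (sorted_pairs_of gap_s).
have P_gt := order_path_min ltn_trans path_P.
have sz_P : size (pairs_of s) = 2 * k - 2 by rewrite size_pairs_of; move: sz_s => /= <-; lia.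
have aE : a = i.
  have := ab i; move: aF; rewrite FE !inE eqxx => /orP[/eqP//|/orP[/eqP->|/(allP P_gt)]] /=; lia.
have [p pP] : exists p, p \in pairs_of s.
  by case: (pairs_of s) sz_P => [|p P] /=; [lia | exists p; rewrite mem_head].
have bP : b \in pairs_of s.
  have /andP[_ p_b] := ab p (ltac:(by rewrite FE !inE pP !orbT)).
  move: bF; rewrite FE !inE => /or3P[/eqP b_i|/eqP b_i|//];
    by have := allP P_gt p pP; rewrite /=; lia.
have P_lt : all (fun t => t < c + (2 * k - 2)) (pairs_of s) = (b < c + (2 * k - 2)).
  apply/allP/idP => [/(_ b bP)//|b_lt t tP].
  by have := ab t (ltac:(by rewrite FE !inE tP !orbT)); lia.
rewrite FE /le_p /= ltnS -sz_P all2_leq_iota ?(path_sorted path_P) // sz_P P_lt aE.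
by rewrite andbA andbb.
Qed.

Lemma inF_extremes_ge1 F a b : inF k 1 n F -> extremes F a b -> 1 <= a.
Proof. by case/inFP=> _ _ rng _ [aF _ _]; case/andP: (rng a aF). Qed.

Lemma B_facet_A_nP F a b : extremes F a b ->
  B_facet k n A F <-> inF k 1 n F /\ a <= m /\ a + b <= n.+1.
Proof.
move=> ext; rewrite /B_facet A_nE; split=> [[F_in [Y /mapP[j j_rng ->] le_FY]]|].
  by move: le_FY j_rng; rewrite (le_p_window _ _ F_in ext) mem_iota; split=> //; lia.
case=> F_in [a_le ab_le]; have a_ge := inF_extremes_ge1 F_in ext.
split=> //; exists (window a); first by apply: map_f; rewrite mem_iota; lia.
by rewrite (le_p_window _ _ F_in ext); lia.
Qed.

Lemma B_facet_shift1P F a b : extremes F a b ->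
  B_facet k n (shift1 A) F <-> inF k 1 n F /\ a < m /\ a + b < n.
Proof.
move=> ext; rewrite /B_facet /shift1 A_nE; split.
  case=> F_in [Y' /mapP[Y]]; rewrite mem_filter => /andP[head_gt /mapP[j j_rng YE]] ->.
  have j_gt : 1 < j by rewrite YE in head_gt.
  move: j_rng; rewrite YE mem_iota => j_rng.
  by rewrite map_predn_window ?(le_p_window _ _ F_in ext); first (split=> //; lia); lia.
case=> F_in [a_lt ab_lt]; have a_ge := inF_extremes_ge1 F_in ext.
split=> //; exists (map predn (window a.+1)).
  apply: map_f; rewrite mem_filter; apply/andP; split; first by rewrite /=; lia.
  by apply: map_f; rewrite mem_iota; lia.
by rewrite map_predn_window ?(le_p_window _ _ F_in ext) /=; lia.
Qed.

Lemma BS_facetP F a b : extremes F a b ->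
  BS_facet k n A F <-> inF k 1 n F /\ BS_ends k n a b.
Proof.
move=> ext; rewrite /BS_facet (B_facet_A_nP ext) (B_facet_shift1P ext).
split=> [[[F_in [a_le ab_le]] not_sh]|[F_in [a_le ab_le not_sh]]].
  by split=> //; split=> // -[a_lt ab_lt]; apply: not_sh.
by split=> [|[_ sh]]; last apply: not_sh.
Qed.

Definition extends_BS_facet X x := exists a b,
  [/\ extremes (x :: X) a b, BS_ends k n a b,
      {in x :: X, forall t, 1 <= t <= n} & even_below (x :: X)].

Lemma BS_facet_sunion1P X x : uniq X -> x \notin X -> size X = (2 * k).-1 ->
  BS_facet k n A (sunion X [:: x]) <-> extends_BS_facet X x.
Proof.
move=> uX xX szX; have pF := perm_sunion1 uX xX.
have memF := perm_mem pF.
have memF' t : (t \in x :: X) = (t \in sunion X [:: x]) by rewrite memF.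
have inF_ext : inF k 1 n (sunion X [:: x]) <->
    {in x :: X, forall t, 1 <= t <= n} /\ even_below (x :: X).
  rewrite inFP (perm_size pF) /= szX; split=> [[_ _ rng ev]|[rng ev]].
    split=> [t|y]; rewrite -memF; [exact: rng | rewrite -(permP pF); exact: ev].
  split=> [||t|y]; rewrite ?memF; [exact: sorted_sunion | lia | exact: rng |].
  by rewrite (permP pF); exact: ev.
split=> [BS_F|[a [b [ext ends rng ev]]]].
  have [a [b ext]] := extremes_exist (isT : x :: X != [::]).
  have [/inF_ext[rng ev] ends] := (BS_facetP (eq_extremes memF' ext)).1 BS_F.
  by exists a, b.
by apply/(BS_facetP (eq_extremes memF' ext)); split=> //; apply/inF_ext.
Qed.

Lemma is_facet_bdry_unique_extension X x0 :
  is_set X -> size X = (2 * k).-1 -> x0 \notin X -> extends_BS_facet X x0 ->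
  (forall x : nat, x \notin X -> extends_BS_facet X x -> x = x0) ->
  is_facet (bdry_face k n A) X.
Proof.
move=> sX szX x0X ext_x0 unique_x0; have uX := sorted_uniq ltn_trans ltnn sX.
have facet_sup F : BS_facet k n A F -> {subset X <= F} -> F = sunion X [:: x0].
  move=> BS_F XF; have [[/inFP[sF szF _ _] _] _] := BS_F.
  have [|x xX FE] := one_point_extension sF uX _ XF; first by rewrite szF szX; lia.
  by move: BS_F; rewrite FE => /(BS_facet_sunion1P uX xX szX) /(unique_x0 x xX) <-.
have bridge : BS_bridge k n A X.
  split=> //; first exists (sunion X [:: x0]).
  - exact/(BS_facet_sunion1P uX x0X szX).
  - by move=> t tX; rewrite mem_sunion tX.
  by move=> F1 F2 BS_F1 BS_F2 XF1 XF2; rewrite (facet_sup F1) // (facet_sup F2).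
split; first by split=> //; exists X.
move=> Y [_ [R [_ szR _ _] YR]] XY t /YR.
have szRX : size R <= size X by rewrite szR szX.
by have [_ ->] := uniq_min_size uX (fun u uX => YR u (XY u uX)) szRX.
Qed.

Lemma le_m a : (a <= m) = (a + a + 2 * k <= n + 2).
Proof. by apply/idP/idP; lia. Qed.

Lemma lt_m a : (a < m) = (a + a + 2 * k <= n).
Proof. by apply/idP/idP; lia. Qed.

Lemma extends_even_above X x : size X = (2 * k).-1 -> extends_BS_facet X x ->
  even_above (x :: X).
Proof.
move=> szX [a [b [_ _ _ ev]]]; apply: even_above_of_below ev.
by rewrite /= szX (_ : (2 * k).-1 = (k.-1).*2.+1) /= ?odd_double //; lia.
Qed.

Lemma bdry_facet_case1 i H : 1 <= i <= m -> inF (k - 2) (i + 2) (n - i) H ->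
  is_facet (bdry_face k n A) (sunion (itv i i.+1) (sunion H [:: n - i + 1])).
Proof.
move=> /andP[i_ge1]; rewrite le_m => i_le /inFP[sH szH rngH evH].
have evH' : even_above H by apply: even_above_of_below evH; rewrite szH oddM.
have [|x0 /andP[x0_rng x0H] fill] := last_gap (H := H) (lo := i + 2) (hi := n - i).
  by rewrite szH; lia.
rewrite (@itv_pair i i.+1) //.
have sX := sorted_sunion [:: i; i.+1] (sunion H [:: n - i + 1]).
have XE : sunion [:: i; i.+1] (sunion H [:: n - i + 1]) = [:: i, i.+1 & H ++ [:: n - i + 1]].
  by rewrite (sunion_sandwich (lo := i + 2) (hi := n - i)) /= ?ltnSn ?andbT //; lia.
have szX : size [:: i, i.+1 & H ++ [:: n - i + 1]] = (2 * k).-1.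
  by rewrite /= size_cat szH /=; lia.
have x0X : x0 \notin [:: i, i.+1 & H ++ [:: n - i + 1]].
  by rewrite !(inE, mem_cat) (negbTE x0H); lia.
rewrite XE in sX *; apply: (is_facet_bdry_unique_extension sX szX x0X).
- exists i, (n - i + 1); split.
  + split; rewrite ?mem_head ?(inE, mem_cat) ?eqxx ?orbT //.
    by move=> t; have := rngH t; rewrite !(inE, mem_cat); lia.
  + by rewrite /BS_ends le_m lt_m; split; lia.
  + by move=> t; have := rngH t; rewrite !(inE, mem_cat); lia.
  + move=> y yF; have yH : y \notin H.
      by apply: contra yF; rewrite !(inE, mem_cat) => ->; rewrite !orbT.
    have y_out : ~~ (x0 < y <= n - i) by apply: contra yH; apply: fill.
    by have := evH y yH; move: yF; rewrite !(inE, mem_cat) /= count_cat /=; lia.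
- move=> x xX ext; have ev' := extends_even_above szX ext.
  have [a [b [[aF _ ab] [_ ab_le _] _ _]]] := ext.
  case: (eqVneq x x0) => // x_x0.
  have x_gt : x0 < x.
    have := ev' x0; have := evH' x0 x0H.
    by rewrite !(inE, mem_cat) (negbTE x0H) eq_sym (negbTE x_x0) /= count_cat /=; lia.
  have x_le : x <= n - i.
    have := ab x (mem_head _ _); have := ab i; have := rngH a.
    by move: aF xX; rewrite !(inE, mem_cat); lia.
  by move: xX; rewrite !(inE, mem_cat) fill ?x_gt ?x_le ?orbT.
Qed.

Lemma bdry_facet_case2 i H : 1 <= i <= m -> inF (k - 2) (i + 2) (n - i - 2) H ->
  is_facet (bdry_face k n A) (sunion (itv i i.+1) (sunion H [:: n - i - 1])).
Proof.
move=> /andP[i_ge1]; rewrite le_m => i_le /inFP[sH szH rngH evH].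
have evH' : even_above H by apply: even_above_of_below evH; rewrite szH oddM.
rewrite (@itv_pair i i.+1) //.
have sX := sorted_sunion [:: i; i.+1] (sunion H [:: n - i - 1]).
have XE : sunion [:: i; i.+1] (sunion H [:: n - i - 1]) = [:: i, i.+1 & H ++ [:: n - i - 1]].
  by rewrite (sunion_sandwich (lo := i + 2) (hi := n - i - 2)) /= ?ltnSn ?andbT //; lia.
have szX : size [:: i, i.+1 & H ++ [:: n - i - 1]] = (2 * k).-1.
  by rewrite /= size_cat szH /=; lia.
have x0X : n - i \notin [:: i, i.+1 & H ++ [:: n - i - 1]].
  by have := rngH (n - i); rewrite !(inE, mem_cat); lia.
rewrite XE in sX *; apply: (is_facet_bdry_unique_extension sX szX x0X).
- exists i, (n - i); split.
  + split; rewrite ?mem_head ?(inE, mem_cat) ?eqxx ?orbT //.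
    by move=> t; have := rngH t; rewrite !(inE, mem_cat); lia.
  + by rewrite /BS_ends le_m lt_m; split; lia.
  + by move=> t; have := rngH t; rewrite !(inE, mem_cat); lia.
  + by move=> y; have := evH y; have := rngH y; rewrite !(inE, mem_cat) /= count_cat /=; lia.
- move=> x xX ext; have ev' := extends_even_above szX ext.
  have [a [b [[aF bF ab] [_ ab_le]]]] := ext; rewrite lt_m => not_shift _ _.
  case: (eqVneq x (n - i)) => // x_x0.
  have x_lt : x < n - i.
    have := ev' (n - i); have := evH' (n - i); have := rngH (n - i).
    by rewrite !(inE, mem_cat) eq_sym (negbTE x_x0) /= count_cat /=; lia.
  (* [x] can only sit strictly inside, which forces [i = m]; then the gap at [x]
     leaves too few places for [H]. *)
  have [x_mid i_ge] : i + 2 <= x <= n - i - 2 /\ n < i + i + 2 * k.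
    have := ab x (mem_head _ _); have := ab i; have := ab (n - i - 1).
    have := rngH a; have := rngH b.
    by move: aF bF xX; rewrite !(inE, mem_cat); lia.
  have xH : x \notin H by apply: contra xX; rewrite !(inE, mem_cat) => ->; rewrite !orbT.
  have := size_lt_of_gap (sorted_uniq ltn_trans ltnn sH) rngH x_mid xH; lia.
Qed.

Lemma bdry_facet_case3 i H : 1 <= i <= m -> inF (k - 2) (i + 2) (n - i - 1) H ->
  is_facet (bdry_face k n A) (sunion [:: i.+1] (sunion H (itv (n - i) (n - i + 1)))).
Proof.
move=> /andP[i_ge1]; rewrite le_m => i_le /inFP[sH szH rngH evH].
rewrite (@itv_pair (n - i) (n - i + 1)) ?addn1 //.
have sX := sorted_sunion [:: i.+1] (sunion H [:: n - i; (n - i).+1]).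
have XE : sunion [:: i.+1] (sunion H [:: n - i; (n - i).+1])
          = i.+1 :: H ++ [:: n - i; (n - i).+1].
  by rewrite (sunion_sandwich (lo := i + 2) (hi := n - i - 1)) /= ?ltnSn ?andbT //; lia.
have szX : size (i.+1 :: H ++ [:: n - i; (n - i).+1]) = (2 * k).-1.
  by rewrite /= size_cat szH /=; lia.
have iX : i \notin i.+1 :: H ++ [:: n - i; (n - i).+1].
  by have := rngH i; rewrite !(inE, mem_cat); lia.
rewrite XE in sX *; apply: (is_facet_bdry_unique_extension sX szX iX).
- exists i, (n - i).+1; split.
  + split; rewrite ?mem_head ?(inE, mem_cat) ?eqxx ?orbT //.
    by move=> t; have := rngH t; rewrite !(inE, mem_cat); lia.
  + by rewrite /BS_ends le_m lt_m; split; lia.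
  + by move=> t; have := rngH t; rewrite !(inE, mem_cat); lia.
  + by move=> y; have := evH y; have := rngH y; rewrite !(inE, mem_cat) /= count_cat /=; lia.
- move=> x xX [a [b [[aF _ ab] [_ ab_le _] _ ev]]].
  have x_le : x <= i.
    have := ab (n - i).+1; have := rngH a.
    by move: aF xX; rewrite !(inE, mem_cat); lia.
  case: (eqVneq x i) => // x_i; have := ev i; have := evH i; have := rngH i.
  by rewrite !(inE, mem_cat) /= count_cat /=; lia.
Qed.

Lemma bdry_facet_case4 i H : 1 <= i <= m -> inF (k - 2) (i + 2) (n - i - 2) H ->
  is_facet (bdry_face k n A) (sunion [:: i] (sunion H (itv (n - i - 1) (n - i)))).
Proof.
move=> /andP[i_ge1]; rewrite le_m => i_le /inFP[sH szH rngH evH].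
rewrite (@itv_pair (n - i - 1) (n - i)); last by lia.
have sX := sorted_sunion [:: i] (sunion H [:: n - i - 1; n - i]).
have XE : sunion [:: i] (sunion H [:: n - i - 1; n - i]) = i :: H ++ [:: n - i - 1; n - i].
  by rewrite (sunion_sandwich (lo := i + 2) (hi := n - i - 2)) /= ?andbT //; lia.
have szX : size (i :: H ++ [:: n - i - 1; n - i]) = (2 * k).-1.
  by rewrite /= size_cat szH /=; lia.
have iX : i.+1 \notin i :: H ++ [:: n - i - 1; n - i].
  by have := rngH i.+1; rewrite !(inE, mem_cat); lia.
rewrite XE in sX *; apply: (is_facet_bdry_unique_extension sX szX iX).
- exists i, (n - i); split.
  + split; rewrite ?(inE, mem_cat) ?eqxx ?orbT //.
    by move=> t; have := rngH t; rewrite !(inE, mem_cat); lia.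
  + by rewrite /BS_ends le_m lt_m; split; lia.
  + by move=> t; have := rngH t; rewrite !(inE, mem_cat); lia.
  + by move=> y; have := evH y; have := rngH y; rewrite !(inE, mem_cat) /= count_cat /=; lia.
- move=> x xX [a [b [[aF bF ab] [_ _]]]]; rewrite lt_m => not_shift _ ev.
  case: (eqVneq x i.+1) => // x_i.
  have x_lt : x < i.
    have := ev i.+1; have := evH i.+1; have := rngH i.+1.
    by move: xX; rewrite !(inE, mem_cat) /= count_cat /=; lia.
  have := ab x (mem_head _ _); have := ab i; have := rngH a; have := rngH b.
  by move: aF bF xX; rewrite !(inE, mem_cat); lia.
Qed.

Lemma bdry_facet_case5 H : inF (k - 2) 2 (n - 2) H ->
  is_facet (bdry_face k n A) (sunion [:: 1] (sunion H (itv (n - 1) n))).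
Proof.
case/inFP=> sH szH rngH evH.
have [|x0 /andP[x0_rng x0H] fill] := first_gap (H := H) (lo := 2) (hi := n - 2).
  by rewrite szH; lia.
rewrite (@itv_pair (n - 1) n); last by lia.
have sX := sorted_sunion [:: 1] (sunion H [:: n - 1; n]).
have XE : sunion [:: 1] (sunion H [:: n - 1; n]) = 1 :: H ++ [:: n - 1; n].
  by rewrite (sunion_sandwich (lo := 2) (hi := n - 2)) /= ?andbT //; lia.
have szX : size (1 :: H ++ [:: n - 1; n]) = (2 * k).-1.
  by rewrite /= size_cat szH /=; lia.
have x0X : x0 \notin 1 :: H ++ [:: n - 1; n].
  by rewrite !(inE, mem_cat) (negbTE x0H); lia.
rewrite XE in sX *; apply: (is_facet_bdry_unique_extension sX szX x0X).
- exists 1, n; split.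
  + split; rewrite ?(inE, mem_cat) ?eqxx ?orbT //.
    by move=> t; have := rngH t; rewrite !(inE, mem_cat); lia.
  + by rewrite /BS_ends le_m lt_m; split; lia.
  + by move=> t; have := rngH t; rewrite !(inE, mem_cat); lia.
  + move=> y yF; have yH : y \notin H.
      by apply: contra yF; rewrite !(inE, mem_cat) => ->; rewrite !orbT.
    have y_out : ~~ (2 <= y < x0) by apply: contra yH; apply: fill.
    by have := evH y yH; move: yF; rewrite !(inE, mem_cat) /= count_cat /=; lia.
- move=> x xX [a [b [_ _ rng ev]]].
  case: (eqVneq x x0) => // x_x0.
  have x_lt : x < x0.
    have := ev x0; have := evH x0 x0H.
    by rewrite !(inE, mem_cat) (negbTE x0H) eq_sym (negbTE x_x0) /= count_cat /=; lia.
  have x_ge : 2 <= x by have := rng x (mem_head _ _); move: xX; rewrite !inE; lia.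
  by move: xX; rewrite !(inE, mem_cat) fill ?x_ge ?x_lt ?orbT.
Qed.

Lemma bdry_facet_case6 H : inF (k - 1) (n./2 - k + 3) (uphalf n + k) H ->
  is_facet (bdry_face k n A) (sunion [:: n./2 - k + 2] H).
Proof.
case/inFP=> sH szH rngH evH.
have -> : n./2 - k + 2 = m.+1 by lia.
have {}rngH : {in H, forall t, m.+2 <= t <= n + 1 - m} by move=> t /rngH; lia.
have sX := sorted_sunion [:: m.+1] H.
have XE : sunion [:: m.+1] H = m.+1 :: H.
  apply: sunion_sorted_cat; rewrite /= (path_sortedE ltn_trans) sH andbT.
  by apply/allP => t /rngH; lia.
have szX : size (m.+1 :: H) = (2 * k).-1 by rewrite /= szH; lia.
have mX : m \notin m.+1 :: H by have := rngH m; rewrite !inE; lia.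
rewrite XE in sX *; apply: (is_facet_bdry_unique_extension sX szX mX).
- have [a [b [aF bF ab]]] := extremes_exist (isT : m :: m.+1 :: H != [::]).
  have a_m : a = m by have := ab m (mem_head _ _); have := rngH a; move: aF; rewrite !inE; lia.
  exists a, b; split=> //.
  + by have := rngH b; move: bF; rewrite /BS_ends a_m !inE; split; lia.
  + by move=> t; have := rngH t; rewrite !inE; lia.
  + by move=> y; have := evH y; have := rngH y; rewrite !inE /=; lia.
- move=> x xX [a [b [[aF _ _] [a_le _ _] _ ev]]].
  have x_le : x <= m by have := rngH a; move: aF a_le; rewrite !inE; lia.
  case: (eqVneq x m) => // x_m; have := ev m; have := evH m; have := rngH m.
  by rewrite !inE /=; lia.
Qed.

End BoundaryOfBA.

Theorem mainTheorem3 (k n : nat) :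
  3 <= k -> 2 * k + 1 <= n ->
  let C := bdry_face k n (A_n k n) in
  let m := n./2 - k + 1 in
  (forall i H, 1 <= i <= m -> inF (k - 2) (i + 2) (n - i) H ->
        is_facet C (sunion (itv i i.+1) (sunion H [:: n - i + 1]))) /\
      (forall i H, 1 <= i <= m -> inF (k - 2) (i + 2) (n - i - 2) H ->
        is_facet C (sunion (itv i i.+1) (sunion H [:: n - i - 1]))) /\
      (forall i H, 1 <= i <= m -> inF (k - 2) (i + 2) (n - i - 1) H ->
        is_facet C (sunion [:: i.+1] (sunion H (itv (n - i) (n - i + 1))))) /\
      (forall i H, 1 <= i <= m -> inF (k - 2) (i + 2) (n - i - 2) H ->
        is_facet C (sunion [:: i] (sunion H (itv (n - i - 1) (n - i))))) /\
      (forall H, inF (k - 2) 2 (n - 2) H ->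
        is_facet C (sunion [:: 1] (sunion H (itv (n - 1) n)))) /\
    (forall H, inF (k - 1) (n./2 - k + 3) (uphalf n + k) H ->
        is_facet C (sunion [:: n./2 - k + 2] H)).
Proof.
move=> hk hn C m.
split; first exact: bdry_facet_case1.
split; first exact: bdry_facet_case2.
split; first exact: bdry_facet_case3.
split; first exact: bdry_facet_case4.
split; first exact: bdry_facet_case5.
exact: bdry_facet_case6.
Qed.
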